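(* Let $\sigma:\mathbb{R}\to\mathbb{R}$ be an increasing odd homeomorphism and let $A,S$ be Borel subsets of $\mathbb{R}_{\geq0}^2$ with $E_\sigma^{-1}(A)=A$. Then for every measure $\mu$ on $S$ that is $\{h_\sigma,v_\sigma\}$-invariant on $S$ and gives measure zero to the coordinate axes, the measure $\nu=1_{A\cap S}\,\mu$ is also $\{h_\sigma,v_\sigma\}$-invariant on $S$.
   Context: $h_\sigma(x,y)=(x+\sigma^{-1}(y),y)$, $v_\sigma(x,y)=(x,\sigma(x)+y)$. $E_\sigma:\mathbb{R}_{\geq0}^2\to\mathbb{R}_{\geq0}^2$ is $E_\sigma(x,y)=(x-\sigma^{-1}(y),y)$ if $y<\sigma(x)$ and $(x,y-\sigma(x))$ if $y\geq\sigma(x)$. A measure $\mu$ on the Borel subsets of $S$ is $\{h_\sigma,v_\sigma\}$-invariant on $S$ if for every Borel $B\subset S$ and $g\in\{h_\sigma,v_\sigma\}$ with $gB\subset S$, $\mu(gB)=\mu(B)$. *)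

From HB Require Import structures.
From mathcomp Require Import all_boot all_order all_algebra.
From mathcomp Require Import all_classical all_reals all_analysis.
Set Implicit Arguments. Unset Strict Implicit. Unset Printing Implicit Defensive.
Import Order.TTheory GRing.Theory Num.Theory numFieldNormedType.Exports.
Local Open Scope classical_set_scope.
Local Open Scope ring_scope.

Section Defs.
Variable R : realType.

Definition quadrant : set (R * R) := [set p | 0 <= p.1 /\ 0 <= p.2].

Definition axes : set (R * R) := [set p | p.1 = 0 \/ p.2 = 0].

(* h_sigma(x,y) = (x + sigma^{-1}(y), y); sigmainv is the inverse of sigma *)
Definition hmap (sigmainv : R -> R) (p : R * R) : R * R :=
  (p.1 + sigmainv p.2, p.2).

Definition vmap (sigma : R -> R) (p : R * R) : R * R :=
  (p.1, sigma p.1 + p.2).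

(* E_sigma on R_{>=0}^2 (the formula, defined on all of R^2) *)
Definition Emap (sigma sigmainv : R -> R) (p : R * R) : R * R :=
  if p.2 < sigma p.1 then (p.1 - sigmainv p.2, p.2)
  else (p.1, p.2 - sigma p.1).

Definition Epreimage (sigma sigmainv : R -> R) (A : set (R * R)) : set (R * R) :=
  [set p | quadrant p /\ A (Emap sigma sigmainv p)].

Definition invariant_on (S : set (R * R)) (g : R * R -> R * R)
  (mu : set (R * R) -> \bar R) : Prop :=
  forall B : set (R * R), measurable B -> B `<=` S -> g @` B `<=` S ->
    mu (g @` B) = mu B.

Definition hv_invariant_on (sigma sigmainv : R -> R) (S : set (R * R))
  (mu : set (R * R) -> \bar R) : Prop :=
  invariant_on S (hmap sigmainv) mu /\ invariant_on S (vmap sigma) mu.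

Definition restrict_measure (A S : set (R * R)) (mu : set (R * R) -> \bar R)
  : set (R * R) -> \bar R := fun B => mu (B `&` (A `&` S)).

End Defs.

(** E_σ undoes h_σ at every p of the quadrant off the y-axis, and undoes v_σ
    on the whole quadrant. So if p and g p lie in S (g = h_σ or v_σ) and p is
    not on the axes, E_σ⁻¹(A) = A gives g p ∈ A ⟺ p ∈ A. Hence g(B) ∩ A ∩ S
    and g(B ∩ A ∩ S) differ by at most the image of B ∩ axes, which is μ-null
    by the g-invariance of μ, and that invariance passes to 1_{A∩S} μ. *)
From HB Require Import structures.
From mathcomp Require Import all_boot all_order all_algebra.
From mathcomp Require Import all_classical all_reals all_analysis.
From mathcomp Require Import measurable_realfun.
Import Order.TTheory GRing.Theory Num.Theory numFieldNormedType.Exports.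
Local Open Scope classical_set_scope.
Local Open Scope ring_scope.

Lemma image_can_preimage (T U : Type) (f : T -> U) (g : U -> T) (X : set T) :
  cancel f g -> cancel g f -> f @` X = g @^-1` X.
Proof.
move=> fK gK; apply/seteqP; split => [_ [x Xx <-]|y Xgy] /=.
  by rewrite fK.
by exists (g y); rewrite ?gK.
Qed.

Lemma measure_sandwich {d} {T : measurableType d} {R : realType}
    (mu : {measure set T -> \bar R}) {C X N : set T} :
  measurable C -> measurable X -> measurable N -> mu N = 0%E ->
  C `<=` X -> X `<=` C `|` N -> mu X = mu C.
Proof.
move=> mC mX mN N0 CX XCN.
have -> : X = C `|` (X `&` N).
  apply/seteqP; split => [x Xx|x [Cx|[]//]]; last exact: CX.
  by case: (XCN x Xx) => [Cx|Nx]; [left|right].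
apply: measureU0 => //; first exact: measurableI.
by apply: (subset_measure0 _ mN); [exact: measurableI|exact: subIsetr|].
Qed.

Section shears.
Context {R : realType}.
Implicit Types (f : R -> R) (X : set (R * R)).

Lemma hmap_image f X : hmap f @` X = hmap (fun y => - f y) @^-1` X.
Proof.
apply: image_can_preimage => p; rewrite /hmap /=.
- by rewrite addrK -surjective_pairing.
- by rewrite subrK -surjective_pairing.
Qed.

Lemma vmap_image f X : vmap f @` X = vmap (fun x => - f x) @^-1` X.
Proof.
apply: image_can_preimage => p; rewrite /vmap /=.
- by rewrite addKr -surjective_pairing.
- by rewrite addNKr -surjective_pairing.
Qed.

Lemma measurable_fun_hmap f :
  measurable_fun setT f -> measurable_fun setT (hmap f).
Proof.
move=> mf; apply: measurable_fun_pair; last exact: measurable_snd.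
apply: measurable_funD; first exact: measurable_fst.
exact: measurableT_comp mf measurable_snd.
Qed.

Lemma measurable_fun_vmap f :
  measurable_fun setT f -> measurable_fun setT (vmap f).
Proof.
move=> mf; apply: measurable_fun_pair; first exact: measurable_fst.
apply: measurable_funD; last exact: measurable_snd.
exact: measurableT_comp mf measurable_fst.
Qed.

Lemma measurable_hmap_image f X :
  measurable_fun setT f -> measurable X -> measurable (hmap f @` X).
Proof.
move=> mf mX; rewrite hmap_image -[_ @^-1` _]setTI.
exact: measurable_fun_hmap _ (measurable_funN mf) measurableT _ mX.
Qed.

Lemma measurable_vmap_image f X :
  measurable_fun setT f -> measurable X -> measurable (vmap f @` X).
Proof.
move=> mf mX; rewrite vmap_image -[_ @^-1` _]setTI.
exact: measurable_fun_vmap _ (measurable_funN mf) measurableT _ mX.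
Qed.

Lemma measurable_axes : measurable (@axes R).
Proof.
have mfst0 := @measurable_fst _ _ R R measurableT _ (measurable_set1 (0 : R)).
have msnd0 := @measurable_snd _ _ R R measurableT _ (measurable_set1 (0 : R)).
by rewrite setTI in mfst0; rewrite setTI in msnd0; exact: measurableU.
Qed.

Context {sigma sigmainv : R -> R}.

Lemma Emap_hmap {p : R * R} :
  {homo sigma : x y / x < y} -> cancel sigmainv sigma ->
  0 < p.1 -> Emap sigma sigmainv (hmap sigmainv p) = p.
Proof.
move=> sigma_incr sigmainvK p1_gt0; rewrite /Emap /hmap /=.
have /sigma_incr : sigmainv p.2 < p.1 + sigmainv p.2 by rewrite ltrDr.
by rewrite sigmainvK => ->; rewrite addrK -surjective_pairing.
Qed.

Lemma Emap_vmap {p : R * R} :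
  0 <= p.2 -> Emap sigma sigmainv (vmap sigma p) = p.
Proof.
move=> p2_ge0; rewrite /Emap /vmap /= ltNge lerDl p2_ge0 /=.
by rewrite [sigma _ + _]addrC addrK -surjective_pairing.
Qed.

Lemma Epreimage_fixedP {A : set (R * R)} {q : R * R} :
  Epreimage sigma sigmainv A = A -> quadrant q ->
  A q <-> A (Emap sigma sigmainv q).
Proof. by move=> EA qq; rewrite -{1}EA; split => [[]|]. Qed.

End shears.

Lemma restrict_measure_invariant_on {R : realType} {g : R * R -> R * R}
    {A S N : set (R * R)} {mu : {measure set (R * R) -> \bar R}} :
  measurable A -> measurable S -> measurable N -> mu N = 0%E ->
  (forall X, measurable X -> measurable (g @` X)) ->
  (forall p, S p -> S (g p) -> ~ N p -> A (g p) <-> A p) ->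
  invariant_on S g mu -> invariant_on S g (restrict_measure A S mu).
Proof.
move=> mA mS mN N0 mg gA g_inv B mB BS gBS; rewrite /restrict_measure.
pose C := B `&` A `&` ~` N.
have mC : measurable C.
  by apply: measurableI; [exact: measurableI|exact: measurableC].
have mBN : measurable (B `&` N) by exact: measurableI.
have BN0 : mu (B `&` N) = 0%E.
  by apply: subset_measure0 N0 => //; exact: subIsetr.
have g_inv_sub X : measurable X -> X `<=` B -> mu (g @` X) = mu X.
  move=> mX XB; apply: g_inv => //; first by move=> p /XB /BS.
  by apply: subset_trans gBS; exact: image_subset.
have gBN0 : mu (g @` (B `&` N)) = 0%E by rewrite g_inv_sub //; exact: subIsetl.
have BAS_C : mu (B `&` (A `&` S)) = mu C.
  apply: (measure_sandwich mu mC _ mBN BN0).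
  - by apply: measurableI => //; exact: measurableI.
  - by move=> p [[Bp Ap] _]; split; last split; [|exact: Ap|exact: BS].
  - by move=> p [Bp [Ap _]]; case: (pselect (N p)) => Np; [right|left].
have gBAS_gC : mu (g @` B `&` (A `&` S)) = mu (g @` C).
  apply: (measure_sandwich mu (mg _ mC) _ (mg _ mBN) gBN0).
  - by apply: measurableI; [exact: mg|exact: measurableI].
  - move=> _ [p [[Bp Ap] Np] <-]; have gpS : S (g p) by apply: gBS; exists p.
    by split; [exists p|split; first by apply/gA => //; exact: BS].
  - move=> _ [[p Bp <-] [gpA gpS]]; case: (pselect (N p)) => Np.
      by right; exists p.
    left; exists p => //; split => //; split => //.
    by apply/(gA p) => //; exact: BS.
by rewrite gBAS_gC BAS_C g_inv_sub //; move=> p [[]].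
Qed.

Theorem lemma10 (R : realType) (sigma sigmainv : R -> R)
  (sigma_cont : continuous sigma) (sigmainv_cont : continuous sigmainv)
  (sigmaK : cancel sigma sigmainv) (sigmainvK : cancel sigmainv sigma)
  (sigma_incr : {homo sigma : x y / x < y})
  (sigma_odd : forall x, sigma (- x) = - sigma x)
  (A S : set (R * R))
  (mA : measurable A) (mS : measurable S)
  (A_sub : A `<=` @quadrant R) (S_sub : S `<=` @quadrant R)
  (hA : Epreimage sigma sigmainv A = A) :
  forall mu : {measure set (R * R) -> \bar R},
    hv_invariant_on sigma sigmainv S mu ->
    mu (@axes R `&` S) = 0%E ->
    hv_invariant_on sigma sigmainv S (restrict_measure A S mu).
Proof.
move=> mu [h_inv v_inv] axes0.
have maxesS : measurable (@axes R `&` S).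
  exact: measurableI measurable_axes mS.
have A_Emap g p : S (g p) -> Emap sigma sigmainv (g p) = p -> A (g p) <-> A p.
  by move=> /S_sub gpq gpK; rewrite (Epreimage_fixedP hA gpq) gpK.
split; apply: (restrict_measure_invariant_on mA mS maxesS axes0) => //.
- by move=> X; apply: measurable_hmap_image; exact: continuous_measurable_fun.
- move=> p Sp hpS p_axes; apply: (A_Emap (hmap sigmainv) p hpS).
  apply: (Emap_hmap sigma_incr sigmainvK); rewrite lt_def (S_sub _ Sp).1 andbT.
  by apply/eqP => p1_0; apply: p_axes; split; [left|].
- by move=> X; apply: measurable_vmap_image; exact: continuous_measurable_fun.
- move=> p Sp vpS _; apply: (A_Emap (vmap sigma) p vpS).
  exact: Emap_vmap (S_sub _ Sp).2.
Qed.
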